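(* Fix $n\in\mathbb N$ and let $c^1\to c^2\to\dots\to c^k$ be a sequence of PSSPM transitions between configurations reachable in PSSPM from $(\underline{n})$. Suppose there is a column $i$ such that (1) for all $1\le t\le k$, $c^t_i=\max_j c^t_j$, and (2) $c^1_i\le c^1_{i+1}+2$. Then for all $1\le t\le k$, $c^t_i\le c^t_{i+1}+2$. Symmetrically, if (1) holds and $c^1_{i-1}+2\ge c^1_i$, then for all $1\le t\le k$, $c^t_{i-1}+2\ge c^t_i$.
   Context: A configuration is a sequence $(c_i)_{i\in\mathbb Z}$ of nonnegative integers with only finitely many positive values; $(\underline{n})$ denotes the configuration with $c_0=n$ and $c_i=0$ otherwise. Rule $\mathcal L$ at column $i$ is applicable if $c_{i-1}+2\le c_i$ and moves one grain from column $i$ to column $i-1$; rule $\mathcal R$ at column $i$ is applicable if $c_i\ge c_{i+1}+2$ and moves one grain from column $i$ to column $i+1$. A PSSPM transition $c\to c'$ applies rules simultaneously on every column where some rule is applicable, at most one rule per column (when both are applicable on a column, one is chosen). A configuration is reachable in PSSPM from $(\underline{n})$ if obtained from it by finitely many PSSPM transitions. *)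

From Stdlib Require Import ZArith Arith Lia.
Open Scope Z_scope.

Definition config := Z -> nat.

Definition finite_support (c : config) : Prop :=
  exists N : Z, forall i : Z, N < Z.abs i -> c i = 0%nat.

Definition single (n : nat) : config := fun i => if Z.eqb i 0 then n else 0%nat.

Definition L_app (c : config) (i : Z) : Prop := (c (i - 1)%Z + 2 <= c i)%nat.
Definition R_app (c : config) (i : Z) : Prop := (c (i + 1)%Z + 2 <= c i)%nat.

Inductive rule := RL | RR.

Definition valid_choice (c : config) (ch : Z -> option rule) : Prop :=
  forall i : Z,
    (ch i = Some RL -> L_app c i) /\
    (ch i = Some RR -> R_app c i) /\
    (ch i = None -> ~ L_app c i /\ ~ R_app c i).

Definition fires (o : option rule) : nat := match o with None => 0%nat | Some _ => 1%nat end.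
Definition is_L (o : option rule) : nat := match o with Some RL => 1%nat | _ => 0%nat end.
Definition is_R (o : option rule) : nat := match o with Some RR => 1%nat | _ => 0%nat end.

Definition apply_choice (c : config) (ch : Z -> option rule) : config :=
  fun i => Nat.add (Nat.add (Nat.sub (c i) (fires (ch i))) (is_L (ch (i + 1)))) (is_R (ch (i - 1))).

Definition psspm_step (c c' : config) : Prop :=
  exists ch : Z -> option rule, valid_choice c ch /\ forall i, c' i = apply_choice c ch i.

Inductive reachable (n : nat) : config -> Prop :=
| reach_init : reachable n (single n)
| reach_step : forall c c', reachable n c -> psspm_step c c' -> reachable n c'.

(* Since column i holds a maximal number of grains, no rule can move a grain
   into it, so in one step it loses at most one grain, and so does its
   neighbour i+1.  Hence a gap c_i - c_{i+1} of at most 1 stays at most 2; a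
   gap of exactly 2 makes rule R applicable at i, so column i fires and loses
   exactly one grain, and the gap stays at most 2 again.  The statement about
   column i-1 is the mirror image. *)

From Stdlib Require Import ZArith Arith Lia.
Open Scope Z_scope.

Lemma fires_le_1 (o : option rule) : (fires o <= 1)%nat.
Proof. destruct o; simpl; lia. Qed.

Lemma apply_choice_ge_pred (c : config) (ch : Z -> option rule) (j : Z) :
  (c j - 1 <= apply_choice c ch j)%nat.
Proof. unfold apply_choice; pose proof (fires_le_1 (ch j)); lia. Qed.

Lemma valid_choice_fires_R (c : config) (ch : Z -> option rule) (j : Z) :
  valid_choice c ch -> R_app c j -> fires (ch j) = 1%nat.
Proof.
  intros Hv HR; destruct (Hv j) as [_ [_ Hnone]].
  destruct (ch j) as [r|]; [reflexivity|].
  destruct (Hnone eq_refl); contradiction.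
Qed.

Section MaxColumn.

Variables (c : config) (ch : Z -> option rule) (i : Z).
Hypothesis Hvalid : valid_choice c ch.
Hypothesis Hmax : forall j : Z, (c j <= c i)%nat.

Lemma valid_choice_no_L_into_max : is_L (ch (i + 1)) = 0%nat.
Proof.
  destruct (Hvalid (i + 1)) as [HL _]; unfold L_app in HL.
  rewrite Z.add_simpl_r in HL.
  destruct (ch (i + 1)) as [[|]|]; try reflexivity.
  specialize (HL eq_refl); specialize (Hmax (i + 1)); lia.
Qed.

Lemma valid_choice_no_R_into_max : is_R (ch (i - 1)) = 0%nat.
Proof.
  destruct (Hvalid (i - 1)) as [_ [HR _]]; unfold R_app in HR.
  rewrite Z.sub_add in HR.
  destruct (ch (i - 1)) as [[|]|]; try reflexivity.
  specialize (HR eq_refl); specialize (Hmax (i - 1)); lia.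
Qed.

Lemma apply_choice_at_max : apply_choice c ch i = (c i - fires (ch i))%nat.
Proof.
  unfold apply_choice.
  rewrite valid_choice_no_L_into_max, valid_choice_no_R_into_max; lia.
Qed.

End MaxColumn.

Lemma psspm_step_max_right_gap (c c' : config) (i : Z) :
  (forall j : Z, (c j <= c i)%nat) -> (c i <= c (i + 1)%Z + 2)%nat ->
  psspm_step c c' -> (c' i <= c' (i + 1)%Z + 2)%nat.
Proof.
  intros Hmax Hgap [ch [Hvalid Hc']].
  rewrite !Hc', (apply_choice_at_max c ch i Hvalid Hmax).
  pose proof (apply_choice_ge_pred c ch (i + 1)) as Hnext.
  destruct (Nat.eq_dec (c i) (c (i + 1) + 2)) as [Heq|Hlt].
  - assert (Hfire : fires (ch i) = 1%nat)
      by (apply (valid_choice_fires_R c ch i Hvalid); unfold R_app; lia).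
    rewrite Hfire; lia.
  - lia.
Qed.

Definition mirror (c : config) : config := fun j => c (- j).

Definition swap_rule (r : rule) : rule := match r with RL => RR | RR => RL end.

Definition mirror_choice (ch : Z -> option rule) : Z -> option rule :=
  fun j => option_map swap_rule (ch (- j)).

Lemma mirror_valid_choice (c : config) (ch : Z -> option rule) :
  valid_choice c ch -> valid_choice (mirror c) (mirror_choice ch).
Proof.
  intros Hv j; unfold mirror_choice, mirror, L_app, R_app.
  replace (- (j - 1)) with (- j + 1) by lia.
  replace (- (j + 1)) with (- j - 1) by lia.
  destruct (Hv (- j)) as [HL [HR Hnone]]; unfold L_app, R_app in *.
  destruct (ch (- j)) as [[|]|]; simpl;
    [specialize (HL eq_refl) | specialize (HR eq_refl) | specialize (Hnone eq_refl)];
    repeat split; intros; try discriminate; tauto.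
Qed.

Lemma apply_mirror_choice (c : config) (ch : Z -> option rule) (j : Z) :
  apply_choice (mirror c) (mirror_choice ch) j = apply_choice c ch (- j).
Proof.
  unfold apply_choice, mirror_choice, mirror.
  replace (- (j + 1)) with (- j - 1) by lia.
  replace (- (j - 1)) with (- j + 1) by lia.
  destruct (ch (- j)) as [[|]|], (ch (- j - 1)) as [[|]|],
    (ch (- j + 1)) as [[|]|]; simpl; lia.
Qed.

Lemma psspm_step_mirror (c c' : config) :
  psspm_step c c' -> psspm_step (mirror c) (mirror c').
Proof.
  intros [ch [Hv Hc']]; exists (mirror_choice ch); split.
  - exact (mirror_valid_choice c ch Hv).
  - intros j; rewrite apply_mirror_choice; apply Hc'.
Qed.

Lemma psspm_step_max_left_gap (c c' : config) (i : Z) :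
  (forall j : Z, (c j <= c i)%nat) -> (c i <= c (i - 1)%Z + 2)%nat ->
  psspm_step c c' -> (c' i <= c' (i - 1)%Z + 2)%nat.
Proof.
  intros Hmax Hgap Hstep.
  pose proof (psspm_step_max_right_gap (mirror c) (mirror c') (- i)) as H.
  unfold mirror in H; rewrite Z.opp_involutive in H.
  replace (- (- i + 1)) with (i - 1) in H by lia.
  apply H; [intros j; apply Hmax | exact Hgap | exact (psspm_step_mirror _ _ Hstep)].
Qed.

Lemma psspm_steps_invariant (P Q : config -> Prop) (k : nat) (c : nat -> config) :
  (forall t : nat, (1 <= t < k)%nat -> psspm_step (c t) (c (S t))) ->
  (forall t : nat, (1 <= t <= k)%nat -> Q (c t)) ->
  (forall x y : config, Q x -> P x -> psspm_step x y -> P y) ->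
  P (c 1%nat) -> forall t : nat, (1 <= t <= k)%nat -> P (c t).
Proof.
  intros Hsteps HQ Hpres H1 t Ht.
  induction t as [|t IH]; [lia|].
  destruct (Nat.eq_dec t 0) as [->|Ht0]; [exact H1|].
  apply (Hpres (c t)); [apply HQ; lia | apply IH; lia | apply Hsteps; lia].
Qed.

Theorem lemma1 (n : nat) (k : nat) (c : nat -> config) (i : Z) :
  (forall t : nat, (1 <= t <= k)%nat -> reachable n (c t)) ->
  (forall t : nat, (1 <= t < k)%nat -> psspm_step (c t) (c (S t))) ->
  (forall t : nat, (1 <= t <= k)%nat -> forall j : Z, (c t j <= c t i)%nat) ->
  ((c 1%nat i <= c 1%nat (i + 1)%Z + 2)%nat ->
     forall t : nat, (1 <= t <= k)%nat -> (c t i <= c t (i + 1)%Z + 2)%nat) /\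
  ((c 1%nat i <= c 1%nat (i - 1)%Z + 2)%nat ->
     forall t : nat, (1 <= t <= k)%nat -> (c t i <= c t (i - 1)%Z + 2)%nat).
Proof.
  intros _ Hsteps Hmax; split.
  - apply (psspm_steps_invariant (fun x => (x i <= x (i + 1)%Z + 2)%nat)
             (fun x => forall j, (x j <= x i)%nat) k c Hsteps Hmax).
    intros x y; apply psspm_step_max_right_gap.
  - apply (psspm_steps_invariant (fun x => (x i <= x (i - 1)%Z + 2)%nat)
             (fun x => forall j, (x j <= x i)%nat) k c Hsteps Hmax).
    intros x y; apply psspm_step_max_left_gap.
Qed.
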